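(* Let $G$ be a group and let $\mathrm{A}(G)$ be the kernel of $\epsilon\colon\mathrm{Gr}(\mathrm{Pq}(G))\to G$. Then there is an exact sequence of abelian groups \[ \mathrm{H}_2(G;\mathbb{Z})\longrightarrow\mathrm{A}(G)\longrightarrow\mathrm{B}(G)\longrightarrow\mathrm{H}_1(G;\mathbb{Z})\longrightarrow 0, \] where $\mathrm{B}(G)$ is the quotient of the free abelian group $\mathbb{Z}\mathrm{Cl}(G)$ on the set $\mathrm{Cl}(G)$ of conjugacy classes of elements of $G$ by the relations $n[a]=[a^n]$ for all $a\in G$ and all $n\in\mathbb{Z}$.
   Context: For a group $G$, $\mathrm{Pq}(G)$ is the power quandle on the underlying set of $G$ with $a\rhd b=aba^{-1}$, $\pi^n(a)=a^n$ ($n\in\mathbb{Z}$), and unit the identity $e$. $\mathrm{Gr}(\mathrm{Pq}(G))$ is the group with generators $\sigma(a)$, $a\in G$, and relations $\sigma(aba^{-1})=\sigma(a)\sigma(b)\sigma(a)^{-1}$, $\sigma(a^n)=\sigma(a)^n$, $\sigma(e)=1$ for all $a,b\in G$, $n\in\mathbb{Z}$. $\epsilon\colon\mathrm{Gr}(\mathrm{Pq}(G))\to G$ is the surjective homomorphism with $\epsilon(\sigma(a))=a$; its kernel is abelian (indeed central). $[a]$ denotes the conjugacy class of $a$. $\mathrm{H}_i(G;\mathbb{Z})$ is integral group homology. *)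

From HB Require Import structures.
From mathcomp Require Import all_boot all_algebra.
From mathcomp Require Import freeg.
Set Implicit Arguments. Unset Strict Implicit. Unset Printing Implicit Defensive.
Import GRing.Theory.
Local Open Scope ring_scope.

(* Abelian groups presented as "subquotients": a carrier type, a       *)
(* membership predicate (the subgroup), an equivalence (equality in    *)
(* the quotient), the group operation and the unit.                    *)
Record sgroup := SGroup {
  sg_car : Type;
  sg_mem : sg_car -> Prop;
  sg_eqv : sg_car -> sg_car -> Prop;
  sg_op  : sg_car -> sg_car -> sg_car;
  sg_one : sg_car }.
Arguments sg_mem : clear implicits.
Arguments sg_eqv : clear implicits.
Arguments sg_op : clear implicits.
Arguments sg_one : clear implicits.

Definition sg_hom (X Y : sgroup) (f : sg_car X -> sg_car Y) : Prop :=
  [/\ (forall x, sg_mem X x -> sg_mem Y (f x)),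
      (forall x y, sg_mem X x -> sg_mem X y -> sg_eqv X x y ->
                   sg_eqv Y (f x) (f y)) &
      (forall x y, sg_mem X x -> sg_mem X y ->
                   sg_eqv Y (f (sg_op X x y)) (sg_op Y (f x) (f y)))].

Definition sg_exact (X Y Z : sgroup) (f : sg_car X -> sg_car Y)
    (g : sg_car Y -> sg_car Z) : Prop :=
  forall y, sg_mem Y y ->
    (sg_eqv Z (g y) (sg_one Z) <-> exists2 x, sg_mem X x & sg_eqv Y (f x) y).

Definition sg_onto (X Y : sgroup) (f : sg_car X -> sg_car Y) : Prop :=
  forall y, sg_mem Y y -> exists2 x, sg_mem X x & sg_eqv Y (f x) y.

Section PowerQuandle.
Variable G : groupType.

Definition zpowg (a : G) (n : int) : G :=
  match n with Posz k => (a ^+ k)%g | Negz k => ((a ^+ k.+1)^-1)%g end.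

(* Gr(Pq(G)): words in the letters sigma(a)^{+-1}; (false,a) = sigma(a),
   (true,a) = sigma(a)^-1, modulo the congruence generated by free
   reduction and the defining relations. *)
Definition word := seq (bool * G).

Definition wpow (a : G) (n : int) : word :=
  match n with Posz k => nseq k (false, a) | Negz k => nseq k.+1 (true, a) end.

Inductive grel : word -> word -> Prop :=
| grel_refl w : grel w w
| grel_sym u v : grel u v -> grel v u
| grel_trans u v w : grel u v -> grel v w -> grel u w
| grel_cat u u' v v' : grel u u' -> grel v v' -> grel (u ++ v) (u' ++ v')
| grel_free (b : bool) (a : G) : grel [:: (b, a); (~~ b, a)] [::]
| grel_conj (a b : G) :
    grel [:: (false, (a * b * a^-1)%g)] [:: (false, a); (false, b); (true, a)]
| grel_pow (a : G) (n : int) : grel [:: (false, zpowg a n)] (wpow a n)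
| grel_unit : grel [:: (false, 1%g)] [::].

Definition weps (w : word) : G :=
  foldr (fun p acc => ((if p.1 then p.2^-1 else p.2) * acc)%g) 1%g w.

Definition AG : sgroup :=
  @SGroup word (fun w => weps w = 1%g) grel cat [::].

Definition C1 := {freeg G / int}.
Definition C2 := {freeg (G * G) / int}.
Definition C3 := {freeg (G * G * G) / int}.

Definition gen1 (a : G) : C1 := << a >>.
Definition gen2 (a b : G) : C2 := << (a, b) >>.

Definition d2 : C2 -> C1 :=
  fglift (fun p : G * G => gen1 p.2 - gen1 (p.1 * p.2)%g + gen1 p.1).
Definition d3 : C3 -> C2 :=
  fglift (fun t : G * G * G =>
    gen2 t.1.2 t.2 - gen2 (t.1.1 * t.1.2)%g t.2
    + gen2 t.1.1 (t.1.2 * t.2)%g - gen2 t.1.1 t.1.2).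

Definition H2 : sgroup :=
  @SGroup C2 (fun x => d2 x = 0) (fun x y => exists z, d3 z = x - y) +%R 0.

(* H_1(G;Z) = C1 / im d2  (d1 = 0) *)
Definition H1 : sgroup :=
  @SGroup C1 (fun _ => True) (fun x y => exists z, d2 z = x - y) +%R 0.

(* B(G) = Z Cl(G) / < n[a] - [a^n] >, where Z Cl(G) = Z[G] / < [a] - [bab^-1] > *)
Inductive Bnull : C1 -> Prop :=
| Bnull0 : Bnull 0
| Bnull_conj (a b : G) : Bnull (gen1 (b * a * b^-1)%g - gen1 a)
| Bnull_pow (a : G) (n : int) : Bnull (n *: gen1 a - gen1 (zpowg a n))
| Bnull_add x y : Bnull x -> Bnull y -> Bnull (x + y)
| Bnull_opp x : Bnull x -> Bnull (- x).

Definition BG : sgroup :=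
  @SGroup C1 (fun _ => True) (fun x y => Bnull (x - y)) +%R 0.

End PowerQuandle.

(* A word in the
   kernel of epsilon is central, since moving sigma(a) past a word u conjugates a
   by epsilon(u). In particular the words sigma(g) sigma(h) sigma(gh)^-1 are
   central, so [g|h] |-> sigma(g) sigma(h) sigma(gh)^-1 extends additively to bar
   2-chains; by the cocycle identity it kills boundaries, which gives
   H_2(G) -> A(G). Abelianizing words gives A(G) -> B(G), whose composite with the
   chain map is the bar differential d_2; B(G) -> H_1(G) is induced by the
   identity of Z[G]. Exactness rests on two facts: every word w equals a chain
   word followed by the single letter sigma(epsilon(w)), and every defining
   relation [bab^-1] - [a], n[a] - [a^n] of B(G) is the boundary of a 2-chain
   whose word is trivial in Gr(Pq(G)). *)

From Pilot Require Import Defs.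
From HB Require Import structures.
From mathcomp Require Import all_boot all_algebra.
From mathcomp Require Import freeg zify.
From Stdlib Require Import Setoid Morphisms.
Set Implicit Arguments. Unset Strict Implicit. Unset Printing Implicit Defensive.
Import GRing.Theory.
Local Open Scope ring_scope.

Section WordGroup.
Variable G : groupType.
Local Notation word := (word G).
Local Notation grel := (@Defs.grel G).
Implicit Types (a b : G) (u v w : word).

#[local] Instance grel_Equivalence : Equivalence grel.
Proof. by split; [exact: grel_refl | exact: grel_sym | exact: grel_trans]. Qed.

#[local] Instance cat_grel_Proper : Proper (grel ==> grel ==> grel) (@cat (bool * G)).
Proof. by move=> ? ? ? ? ? ?; apply: grel_cat. Qed.

#[local] Instance cons_grel_Proper : Proper (eq ==> grel ==> grel) (@cons (bool * G)).
Proof. by move=> x _ <- u v; apply: (grel_cat (grel_refl [:: x])). Qed.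

#[local] Hint Resolve grel_refl : core.

Lemma sigmaKV a w : grel [:: (false, a), (true, a) & w] w.
Proof. exact: (grel_cat (grel_free false a) (grel_refl w)). Qed.

Lemma sigmaVK a w : grel [:: (true, a), (false, a) & w] w.
Proof. exact: (grel_cat (grel_free true a) (grel_refl w)). Qed.

Lemma sigma_conj a b w :
  grel ((false, (a * b * a^-1)%g) :: w) [:: (false, a), (false, b), (true, a) & w].
Proof. exact: (grel_cat (grel_conj a b) (grel_refl w)). Qed.

Lemma weps_cat u v : weps (u ++ v) = (weps u * weps v)%g.
Proof. by elim: u => [|x u IHu] /=; rewrite ?mul1g // IHu mulgA. Qed.

Definition winv w : word := rev [seq (~~ x.1, x.2) | x <- w].

Lemma winv_cons x w : winv (x :: w) = winv w ++ [:: (~~ x.1, x.2)].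
Proof. by rewrite /winv /= rev_cons cats1. Qed.

Lemma winv_cat u v : winv (u ++ v) = winv v ++ winv u.
Proof. by rewrite /winv map_cat rev_cat. Qed.

Lemma winvK : involutive winv.
Proof. by move=> w; rewrite /winv map_rev revK -map_comp map_id_in // => -[[] ?]. Qed.

Lemma weps_winv w : weps (winv w) = (weps w)^-1%g.
Proof.
elim: w => [|[[] a] w IHw]; rewrite ?invg1 // winv_cons weps_cat IHw invgM /=.
  by rewrite invgK mulg1.
by rewrite mulg1.
Qed.

Lemma cat_winv w : grel (w ++ winv w) [::].
Proof.
elim: w => [//|[b a] w IHw].
by rewrite winv_cons -cat1s -!catA (catA w) IHw /=; apply: grel_free.
Qed.

Lemma winv_cat_id w : grel (winv w ++ w) [::].
Proof. by rewrite -{2}(winvK w) cat_winv. Qed.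

Lemma winv_grel u v : grel u v -> grel (winv u) (winv v).
Proof.
move=> uv; transitivity (winv u ++ (v ++ winv v)); first by rewrite cat_winv cats0.
transitivity (winv u ++ (u ++ winv v)); last by rewrite catA winv_cat_id.
by apply: grel_cat => //; apply: grel_cat => //; symmetry.
Qed.

#[local] Instance winv_Proper : Proper (grel ==> grel) winv.
Proof. exact: winv_grel. Qed.

Lemma sigma_cat_conj u a :
  grel (u ++ [:: (false, a)]) ((false, weps u * a * (weps u)^-1)%g :: u).
Proof.
elim: u a => [|[b c] u IHu] a /=; first by rewrite mul1g invg1 mulg1.
rewrite IHu; set x := (_ * a * _)%g; case: b => /=.
- have -> : x = (c * (c^-1 * x * c) * c^-1)%g by rewrite !mulgA mulgV mul1g mulgK.
  by rewrite sigma_conj (sigmaVK c) /x invgM invgK !mulgA.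
- have -> : (c * weps u * a / (c * weps u) = c * x * c^-1)%g.
    by rewrite /x invgM !mulgA.
  by rewrite (sigma_conj c x) (sigmaVK c).
Qed.

Lemma ker_weps_central_sigma w x : weps w = 1%g -> grel (w ++ [:: x]) (x :: w).
Proof.
case: x => [[] a] w1; have := sigma_cat_conj w a; rewrite w1 mul1g invg1 mulg1 => wa //.
transitivity ((true, a) :: (w ++ [:: (false, a)]) ++ [:: (true, a)]).
  by rewrite wa /= (sigmaVK a).
by rewrite /= -catA /= (sigmaKV a) cats0.
Qed.

Lemma ker_weps_central w u : weps w = 1%g -> grel (w ++ u) (u ++ w).
Proof.
move=> w1; elim: u => [|x u IHu]; first by rewrite cats0.
by rewrite -cat1s catA ker_weps_central_sigma //= IHu.
Qed.

Definition wzpow w (n : int) : word :=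
  match n with
  | Posz k => flatten (nseq k w)
  | Negz k => flatten (nseq k.+1 (winv w))
  end.

Lemma weps_wzpow w n : weps w = 1%g -> weps (wzpow w n) = 1%g.
Proof.
have weps_rep u k : weps u = 1%g -> weps (flatten (nseq k u)) = 1%g.
  by move=> u1; elim: k => //= k IHk; rewrite weps_cat u1 IHk mul1g.
by move=> w1; case: n => k; apply: weps_rep; rewrite ?weps_winv w1 ?invg1.
Qed.

Lemma wzpowD1 w n : grel (wzpow w (n + 1)) (w ++ wzpow w n).
Proof.
case: n => [k|[|k]]; first by rewrite -PoszD addn1.
  by rewrite /= cats0 cat_winv.
have -> : Negz k.+1 + 1 = Negz k by rewrite !NegzE; lia.
by rewrite /= catA cat_winv.
Qed.

Lemma wzpowB1 w n : grel (wzpow w (n - 1)) (winv w ++ wzpow w n).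
Proof.
case: n => [[|k]|k] //.
  have -> : Posz k.+1 - 1 = Posz k by lia.
  by rewrite /= catA winv_cat_id.
by have -> : Negz k - 1 = Negz k.+1 by rewrite !NegzE; lia.
Qed.

Lemma wzpowD w m n : grel (wzpow w (m + n)) (wzpow w m ++ wzpow w n).
Proof.
elim/int_ind: m => [|m IHm|m IHm]; first by rewrite add0r.
  have -> : Posz m.+1 + n = (Posz m + n) + 1 by lia.
  have -> : Posz m.+1 = Posz m + 1 by lia.
  by rewrite !wzpowD1 IHm catA.
have -> : - Posz m.+1 + n = (- Posz m + n) - 1 by lia.
have -> : - Posz m.+1 = - Posz m - 1 by lia.
by rewrite !wzpowB1 IHm catA.
Qed.

Definition wab w : C1 G := \sum_(x <- w) (if x.1 then - gen1 x.2 else gen1 x.2).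

Lemma wab_cat u v : wab (u ++ v) = wab u + wab v.
Proof. exact: big_cat. Qed.

Lemma wab_nil : wab [::] = 0.
Proof. exact: big_nil. Qed.

Lemma wab_cons x w : wab (x :: w) = (if x.1 then - gen1 x.2 else gen1 x.2) + wab w.
Proof. exact: big_cons. Qed.

Lemma wab_winv w : wab (winv w) = - wab w.
Proof.
elim: w => [|[b a] w IHw]; first by rewrite wab_nil oppr0.
rewrite winv_cons wab_cat IHw !wab_cons wab_nil addr0 opprD addrC.
by case: b; rewrite /= ?opprK.
Qed.

Lemma scale_intmul (n : int) (v : C1 G) : n *: v = v *~ n.
Proof. by rewrite -[n in LHS]intz scaler_int. Qed.

Lemma wab_rep w k : wab (flatten (nseq k w)) = wab w *+ k.
Proof.
elim: k => [|k IHk]; first exact: wab_nil.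
by rewrite mulrS /= wab_cat IHk.
Qed.

Lemma wab_wzpow w n : wab (wzpow w n) = n *: wab w.
Proof. by rewrite scale_intmul; case: n => k; rewrite /wzpow wab_rep ?wab_winv ?mulNrn. Qed.

Lemma wab_wpow a n : wab (wpow a n) = n *: gen1 a.
Proof.
have wab_nseq x k : wab (nseq k x) = wab [:: x] *+ k.
  elim: k => [|k IHk]; first exact: wab_nil.
  by rewrite mulrS -IHk -wab_cat.
by rewrite scale_intmul; case: n => k; rewrite /wpow wab_nseq wab_cons wab_nil addr0 ?mulNrn.
Qed.

Section CentralLift.
Variables (K : choiceType) (c : K -> word).
Hypothesis weps_c : forall k, weps (c k) = 1%g.

Definition wlift (s : seq (int * K)) : word := flatten [seq wzpow (c x.2) x.1 | x <- s].

Lemma wlift_cat s1 s2 : wlift (s1 ++ s2) = wlift s1 ++ wlift s2.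
Proof. by rewrite /wlift map_cat flatten_cat. Qed.

Lemma weps_wlift s : weps (wlift s) = 1%g.
Proof. by elim: s => //= x s IHs; rewrite weps_cat IHs weps_wzpow ?mulg1. Qed.

Lemma wzpow_central k n u : grel (wzpow (c k) n ++ u) (u ++ wzpow (c k) n).
Proof. exact/ker_weps_central/weps_wzpow. Qed.

Lemma grel_extract_wzpow (L : seq K) k n (q r : K -> int) :
    uniq L -> k \in L -> (forall j, q j = (if j == k then n else 0) + r j) ->
  grel (flatten [seq wzpow (c j) (q j) | j <- L])
       (wzpow (c k) n ++ flatten [seq wzpow (c j) (r j) | j <- L]).
Proof.
elim: L => [//|j L IHL] /= /andP[jL uL]; rewrite in_cons => kL qE.
have [ejk|njk] := eqVneq j k.
  subst j; rewrite qE eqxx wzpowD -catA.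
  suff -> : [seq wzpow (c i) (q i) | i <- L] = [seq wzpow (c i) (r i) | i <- L] by [].
  apply/eq_in_map => i iL; rewrite qE ifN ?add0r //.
  by apply: contraNneq jL => <-.
rewrite eq_sym (negbTE njk) /= in kL.
by rewrite qE (negbTE njk) add0r IHL // catA wzpow_central -catA.
Qed.

Lemma wlift_normal (L : seq K) s : uniq L -> {subset [seq x.2 | x <- s] <= L} ->
  grel (wlift s) (flatten [seq wzpow (c k) (precoeff k s) | k <- L]).
Proof.
move=> uL; elim: s => [|[n k] s IHs] sL.
  by rewrite (eq_map (fun k => congr1 _ (@precoeff_nil _ _ k))); elim: L {uL sL}.
rewrite /wlift /= (@grel_extract_wzpow L k n _ (fun j => precoeff j s)) //.
- by rewrite -IHs // => x xs; apply: sL; rewrite inE xs orbT.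
- by apply: sL; rewrite inE eqxx.
- by move=> j; rewrite precoeff_cons eq_sym; case: eqP; rewrite ?mul1r ?mul0r.
Qed.

Lemma wlift_precoeff s1 s2 :
  (forall k, precoeff k s1 = precoeff k s2) -> grel (wlift s1) (wlift s2).
Proof.
move=> s12; pose L := undup ([seq x.2 | x <- s1] ++ [seq x.2 | x <- s2]).
rewrite (@wlift_normal L s1) ?(@wlift_normal L s2) ?undup_uniq //.
- by rewrite (eq_map (fun k => congr1 _ (s12 k))).
all: by move=> x xs; rewrite mem_undup mem_cat xs ?orbT.
Qed.

(* [fgenum D] is an arbitrary representative of [D]; since the [c k] are central,
   [wlift_precoeff] makes the result independent of that choice up to [grel]. *)
Definition fgword (D : {freeg K / int}) : word := wlift (fgenum D).

Lemma fgword_Freeg s : grel (fgword [freeg s]) (wlift s).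
Proof. by apply: wlift_precoeff => k; rewrite -coeff_Freeg Freeg_enum coeff_Freeg. Qed.

Lemma weps_fgword D : weps (fgword D) = 1%g.
Proof. exact: weps_wlift. Qed.

Lemma fgwordD D1 D2 : grel (fgword (D1 + D2)) (fgword D1 ++ fgword D2).
Proof.
rewrite -[D1 in fgword (D1 + _)]Freeg_enum -[D2 in fgword (_ + D2)]Freeg_enum.
by rewrite -freeg_cat fgword_Freeg wlift_cat.
Qed.

Lemma fgword0 : grel (fgword 0) [::].
Proof. by rewrite -freeg_nil fgword_Freeg. Qed.

Lemma fgwordN D : grel (fgword (- D)) (winv (fgword D)).
Proof.
transitivity (winv (fgword D) ++ (fgword D ++ fgword (- D))).
  by rewrite catA winv_cat_id.
by rewrite -fgwordD addrN fgword0 cats0.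
Qed.

Lemma fgwordB D1 D2 : grel (fgword (D1 - D2)) (fgword D1 ++ winv (fgword D2)).
Proof. by rewrite fgwordD fgwordN. Qed.

Lemma fgwordU k : grel (fgword << k >>) (c k).
Proof. by rewrite (fgword_Freeg [:: (1, k)]) /wlift /= !cats0. Qed.

Lemma fgword_trivD D1 D2 :
  grel (fgword D1) [::] -> grel (fgword D2) [::] -> grel (fgword (D1 + D2)) [::].
Proof. by move=> D1nil D2nil; rewrite fgwordD D1nil D2nil. Qed.

Lemma fgword_trivN D : grel (fgword D) [::] -> grel (fgword (- D)) [::].
Proof. by move=> Dnil; rewrite fgwordN Dnil. Qed.

Lemma fgword_trivZ (n : int) D : grel (fgword D) [::] -> grel (fgword (n *: D)) [::].
Proof.
move=> Dnil; have trivMn k : grel (fgword (D *+ k)) [::].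
  by elim: k => [|k IHk]; rewrite ?mulr0n ?fgword0 // mulrS fgword_trivD.
rewrite -[n]intz scaler_int; case: n => k; first exact: trivMn.
by rewrite NegzE mulrNz; apply/fgword_trivN/trivMn.
Qed.

Lemma wab_fgword (f : K -> C1 G) :
  (forall k, wab (c k) = f k) -> forall D, wab (fgword D) = fglift f D.
Proof.
move=> wab_c D; rewrite -[D in RHS]Freeg_enum fglift_Freeg /fgword.
elim: (fgenum D) => [|x s IHs]; first by rewrite prelift_nil; apply: wab_nil.
by case: x => n k; rewrite prelift_cons /= wab_cat wab_wzpow wab_c IHs.
Qed.

End CentralLift.

Definition bar_word (p : G * G) : word :=
  [:: (false, p.1); (false, p.2); (true, (p.1 * p.2)%g)].

Lemma weps_bar_word p : weps (bar_word p) = 1%g.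
Proof. by rewrite /= mulg1 invgM !mulgA mulgK mulgV. Qed.

Local Notation chain_word := (fgword bar_word).

HB.instance Definition _ :=
  GRing.isZmodMorphism.Build (C2 G) (C1 G) (@d2 G) (lift_is_additive _).

Lemma d2_gen2 a b : d2 (gen2 a b) = gen1 b - gen1 (a * b)%g + gen1 a.
Proof. by rewrite /d2 /gen2 liftU scale1r. Qed.

Lemma wab_chain_word z : wab (chain_word z) = d2 z.
Proof.
apply: wab_fgword => -[a b].
by rewrite !wab_cons wab_nil /= addr0 addrC.
Qed.

Lemma Bnull_subC x y : Bnull (x - y) -> Bnull (y - x :> C1 G).
Proof. by move=> Bxy; rewrite -opprB; apply: Bnull_opp. Qed.

Lemma Bnull_sub_trans x y z : Bnull (x - y) -> Bnull (y - z) -> Bnull (x - z :> C1 G).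
Proof. by move=> Bxy /(Bnull_add Bxy); rewrite addrA subrK. Qed.

Lemma Bnull_gen1_1 : Bnull (gen1 (1%g : G)).
Proof. by have := Bnull_opp (Bnull_pow (1%g : G) 0); rewrite scale0r sub0r opprK. Qed.

Lemma wab_grel u v : grel u v -> Bnull (wab u - wab v).
Proof.
elim=> {u v}.
- by move=> w; rewrite subrr; apply: Bnull0.
- by move=> u v _; apply: Bnull_subC.
- by move=> u v w _ Buv _; apply: Bnull_sub_trans.
- move=> u u' v v' _ Bu _ Bv.
  by rewrite !wab_cat opprD addrACA; apply: Bnull_add.
- by move=> [] a; rewrite !wab_cons wab_nil /= addr0 subr0 ?addNr ?addrN; apply: Bnull0.
- move=> a b; rewrite !wab_cons wab_nil /= !addr0 addrCA subrr addr0.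
  exact: Bnull_conj.
- by move=> a n; rewrite wab_cons wab_nil addr0 wab_wpow; apply/Bnull_subC/Bnull_pow.
- by rewrite wab_cons wab_nil addr0 subr0; apply: Bnull_gen1_1.
Qed.

Definition trivial_boundary (y : C1 G) : Prop :=
  exists2 z : C2 G, d2 z = y & grel (chain_word z) [::].

Lemma trivial_boundaryD y1 y2 :
  trivial_boundary y1 -> trivial_boundary y2 -> trivial_boundary (y1 + y2).
Proof.
move=> [z1 <- z1nil] [z2 <- z2nil]; exists (z1 + z2); first exact: raddfD.
exact: (fgword_trivD weps_bar_word).
Qed.

Lemma trivial_boundaryN y : trivial_boundary y -> trivial_boundary (- y).
Proof.
move=> [z <- znil]; exists (- z); first exact: raddfN.
exact: (fgword_trivN weps_bar_word).
Qed.

Lemma trivial_boundary_bar a b :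
  grel (bar_word (a, b)) [::] -> trivial_boundary (gen1 b - gen1 (a * b)%g + gen1 a).
Proof. by move=> ab_nil; exists (gen2 a b); rewrite ?d2_gen2 // (fgwordU weps_bar_word). Qed.

Lemma zpowgS a n : zpowg a (n + 1) = (zpowg a n * a)%g.
Proof.
case: n => [k|[|k]]; first by rewrite -PoszD addn1 /= expgSr.
  by rewrite /= mulVg.
have -> : Negz k.+1 + 1 = Negz k by rewrite !NegzE; lia.
by rewrite /= [(a ^+ k.+2)%g]expgS invgM mulgVK.
Qed.

Lemma wpowD1 a n : grel (wpow a n ++ [:: (false, a)]) (wpow a (n + 1)).
Proof.
have nseq_cons k x s : nseq k x ++ x :: s = x :: nseq k x ++ s by elim: k => //= k ->.
case: n => [k|[|k]]; first by rewrite -PoszD addn1 /= nseq_cons cats0.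
  by rewrite /= (sigmaVK a).
have -> : Negz k.+1 + 1 = Negz k by rewrite !NegzE; lia.
by rewrite /= -nseq_cons (sigmaVK a) cats0.
Qed.

Lemma bar_word_zpowg a n : grel (bar_word (zpowg a n, a)) [::].
Proof.
rewrite /bar_word /= -zpowgS.
transitivity (wpow a n ++ [:: (false, a)] ++ winv [:: (false, zpowg a (n + 1))]).
  exact: (grel_cat (grel_pow a n) (grel_refl _)).
by rewrite (winv_grel (grel_pow a (n + 1))) catA wpowD1 cat_winv.
Qed.

(* The chain [sum_(0 <= k < n) [a^k | a]] telescopes to [n[a] - [a^n]], and each
   [bar_word (a^k, a)] is trivial by the power relations. *)
Lemma trivial_boundary_pow a n : trivial_boundary (n *: gen1 a - gen1 (zpowg a n)).
Proof.
have up m : trivial_boundary (m *: gen1 a - gen1 (zpowg a m)) ->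
            trivial_boundary ((m + 1) *: gen1 a - gen1 (zpowg a (m + 1))).
  move/trivial_boundaryD/(_ (trivial_boundary_bar (bar_word_zpowg a m))).
  by rewrite addrCA subrK addrC addrA -zpowgS scalerDl scale1r.
have down m : trivial_boundary (m *: gen1 a - gen1 (zpowg a m)) ->
              trivial_boundary ((m - 1) *: gen1 a - gen1 (zpowg a (m - 1))).
  move/trivial_boundaryD/(_ (trivial_boundaryN
    (trivial_boundary_bar (bar_word_zpowg a (m - 1))))).
  by rewrite -zpowgS subrK opprD opprB !addrA subrK scalerDl scaleN1r.
elim/int_ind: n => [|n|n].
- have := trivial_boundaryN (trivial_boundary_bar (bar_word_zpowg a 0)).
  by rewrite /= mul1g subrr add0r scale0r sub0r.
- have -> : Posz n.+1 = Posz n + 1 by lia.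
  exact: up.
- have -> : - Posz n.+1 = - Posz n - 1 by lia.
  exact: down.
Qed.

Lemma Bnull_trivial_boundary y : Bnull y -> trivial_boundary y.
Proof.
elim=> {y} [|a b|a n|x y _ tx _ ty|x _ tx].
- by exists 0; rewrite ?raddf0 ?(fgword0 weps_bar_word).
- exists (gen2 (b * a * b^-1)%g b - gen2 b a).
    rewrite raddfB /= !d2_gen2 mulgVK opprD opprB addrAC !addrA subrK.
    by rewrite (addrAC (gen1 b)) subrr sub0r addrC.
  rewrite (fgwordB weps_bar_word) !(fgwordU weps_bar_word) /bar_word /winv /rev /= mulgVK.
  by rewrite (sigmaVK (b * a)) (sigma_conj b a) (sigmaVK b) (sigmaKV a) (sigmaKV b).
- exact: trivial_boundary_pow.
- exact: trivial_boundaryD.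
- exact: trivial_boundaryN.
Qed.

Lemma weps_winv_bar_word p : weps (winv (bar_word p)) = 1%g.
Proof. by rewrite weps_winv weps_bar_word invg1. Qed.

Lemma bar_word_cocycle g h k :
  grel (bar_word (g, h) ++ bar_word ((g * h)%g, k))
       (bar_word (h, k) ++ bar_word (g, (h * k)%g)).
Proof.
transitivity ([:: (false, g)] ++ bar_word (h, k) ++ [:: (true, g)] ++ bar_word (g, (h * k)%g)).
  by rewrite /= (sigmaVK (g * h)) (sigmaVK g) (sigmaVK (h * k)) mulgA.
rewrite catA -(ker_weps_central _ (weps_bar_word (h, k))) -catA /=.
by rewrite (sigmaKV g).
Qed.

Lemma chain_word_d3 z : grel (chain_word (d3 z)) [::].
Proof.
rewrite /d3 -[z]Freeg_enum fglift_Freeg /prelift.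
elim: (fgenum z) => [|x s IHs]; first by rewrite big_nil (fgword0 weps_bar_word).
rewrite big_cons; apply: (fgword_trivD weps_bar_word) => //.
apply: (fgword_trivZ weps_bar_word); case: x.2 => -[g h] k /=.
rewrite (fgwordB weps_bar_word) (fgwordD weps_bar_word) (fgwordB weps_bar_word).
rewrite !(fgwordU weps_bar_word) -!catA.
rewrite (ker_weps_central _ (weps_winv_bar_word ((g * h)%g, k))) -!catA -winv_cat.
by rewrite (ker_weps_central _ (weps_bar_word ((g * h)%g, k))) catA -bar_word_cocycle cat_winv.
Qed.

Lemma word_chain_decomp w : exists z, grel w (chain_word z ++ [:: (false, weps w)]).
Proof.
have chain_central z u : grel (chain_word z ++ u) (u ++ chain_word z).
  exact/ker_weps_central/(weps_fgword weps_bar_word).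
elim: w => [|[[] a] w [z IHz]] /=.
- by exists 0; rewrite (fgword0 weps_bar_word) grel_unit.
- set e := weps w in IHz *; pose b := (a^-1 * e)%g.
  exists (z - gen2 a b); rewrite (fgwordB weps_bar_word) (fgwordU weps_bar_word) IHz.
  have -> : e = (a * b)%g by rewrite /b mulVKg.
  rewrite -catA -[_ :: _]cat1s catA -chain_central -catA; apply: grel_cat => //.
  transitivity ([:: (true, a)] ++ winv (bar_word (a, b)) ++ [:: (false, a); (false, b)]).
    by rewrite /bar_word /winv /rev /= (sigmaVK a) (sigmaVK b).
  by rewrite catA -(ker_weps_central _ (weps_winv_bar_word _)) -catA /= (sigmaVK a) mulKg.
- set e := weps w in IHz *; exists (z + gen2 a e).
  rewrite (fgwordD weps_bar_word) (fgwordU weps_bar_word) IHz -catA.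
  by rewrite -[_ :: _]cat1s catA -chain_central -catA /= (sigmaVK (a * e)).
Qed.

Lemma ker_weps_chain w :
  weps w = 1%g -> exists2 z, grel w (chain_word z) & Bnull (wab w - d2 z).
Proof.
move=> w1; have [z] := word_chain_decomp w; rewrite w1 grel_unit cats0 => wz.
by exists z; rewrite // -wab_chain_word; apply: wab_grel.
Qed.

Lemma chain_word_hom : @sg_hom (H2 G) (AG G) chain_word.
Proof.
split=> /= [z _|z1 z2 _ _ [z3 z3E]|z1 z2 _ _]; first exact: (weps_fgword weps_bar_word).
  have -> : z1 = d3 z3 + z2 by rewrite z3E subrK.
  by rewrite (fgwordD weps_bar_word) chain_word_d3.
exact: (fgwordD weps_bar_word).
Qed.

Lemma wab_hom : @sg_hom (AG G) (BG G) wab.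
Proof.
split=> //= [u v _ _|u v _ _]; first exact: wab_grel.
by rewrite wab_cat subrr; apply: Bnull0.
Qed.

Lemma id_hom : @sg_hom (BG G) (H1 G) id.
Proof.
split=> //= [x y _ _ /Bnull_trivial_boundary [z zE _]|x y _ _]; first by exists z.
by exists 0; rewrite raddf0 subrr.
Qed.

Lemma chain_word_wab_exact : @sg_exact (H2 G) (AG G) (BG G) chain_word wab.
Proof.
move=> w /= w1; have [z wz Bwz] := ker_weps_chain w1; split => [Bw|[z' z'0 z'w]].
  have /Bnull_trivial_boundary[z' z'E z'nil] := Bnull_sub_trans (Bnull_subC Bwz) Bw.
  exists (z - z'); first by rewrite raddfB /= z'E subr0 subrr.
  by rewrite (fgwordB weps_bar_word) z'nil cats0 wz.
by have := wab_grel z'w; rewrite wab_chain_word z'0; apply: Bnull_subC.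
Qed.

Lemma wab_id_exact : @sg_exact (AG G) (BG G) (H1 G) wab id.
Proof.
move=> y _ /=; split => [[z zE]|[w w1 Bwy]].
  exists (chain_word z); first exact: (weps_fgword weps_bar_word).
  by rewrite wab_chain_word zE subr0 subrr; apply: Bnull0.
have [z _ Bwz] := ker_weps_chain w1.
have [z' z'E _] := Bnull_trivial_boundary (Bnull_sub_trans (Bnull_subC Bwy) Bwz).
by exists (z + z'); rewrite raddfD /= z'E addrC subrK subr0.
Qed.

Lemma id_onto : @sg_onto (BG G) (H1 G) id.
Proof. by move=> y _; exists y => //; exists 0; rewrite raddf0 subrr. Qed.

End WordGroup.

Theorem mainTheorem10 (G : groupType) :
  exists (f1 : sg_car (H2 G) -> sg_car (AG G))
         (f2 : sg_car (AG G) -> sg_car (BG G))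
         (f3 : sg_car (BG G) -> sg_car (H1 G)),
    [/\ sg_hom f1, sg_hom f2 & sg_hom f3] /\
    [/\ sg_exact f1 f2, sg_exact f2 f3 & sg_onto f3].
Proof.
exists (fgword (@bar_word G)), (@wab G), id.
split; split; [exact: chain_word_hom | exact: wab_hom | exact: id_hom |
               exact: chain_word_wab_exact | exact: wab_id_exact | exact: id_onto].
Qed.
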